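(* Let $(A,\cdot,[\,,\,],\varepsilon)$ be an $F$-manifold color algebra, let $V$ be a $G$-graded vector space, let $\rho:A\to\mathfrak{gl}(V)$ be a representation of the Lie color algebra $(A,[\,,\,],\varepsilon)$ and let $\mu:A\to\mathfrak{gl}(V)$ be a representation of the $\varepsilon$-commutative associative algebra $(A,\cdot,\varepsilon)$ such that for all homogeneous $x,y,z\in A$: $$R_{\rho,\mu}(x\cdot y,z)=\varepsilon(x,y+z)R_{\rho,\mu}(y,z)\mu(x)+\varepsilon(y,z)R_{\rho,\mu}(x,z)\mu(y),$$ $$\mu(P_x(y,z))=-\varepsilon(x,y+z)T_{\rho,\mu}(y,z)\mu(x)+\mu(x)T_{\rho,\mu}(y,z),$$ where $R_{\rho,\mu}(x,y)=\rho(x)\mu(y)-\varepsilon(x,y)\mu(y)\rho(x)-\mu([x,y])$ and $T_{\rho,\mu}(x,y)=-\varepsilon(x,y)\rho(y)\mu(x)-\rho(x)\mu(y)+\rho(x\cdot y)$. Then $(V^*,\rho^*,-\mu^* )$ is a representation of the $F$-manifold color algebra $A$.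
   Context: $G$ is an abelian group and $\varepsilon:G\times G\to\mathbb K\setminus\{0\}$ is a skew-symmetric bicharacter: $\varepsilon(a,b)\varepsilon(b,a)=1$, $\varepsilon(a,b+c)=\varepsilon(a,b)\varepsilon(a,c)$, $\varepsilon(a+b,c)=\varepsilon(a,c)\varepsilon(b,c)$; $\mathbb K$ is algebraically closed of characteristic zero, spaces finite-dimensional. For homogeneous $x\in A_a,y\in A_b$, $\varepsilon(x,y)$ means $\varepsilon(a,b)$, $\varepsilon(x,y+z)$ means $\varepsilon(a,b+c)$, etc. An $\varepsilon$-commutative associative algebra is a $G$-graded associative algebra $(A,\cdot)$ with $A_aA_b\subseteq A_{a+b}$ and $x\cdot y=\varepsilon(x,y)y\cdot x$. A Lie color algebra is a $G$-graded space with bilinear $[\,,\,]$, $[A_a,A_b]\subseteq A_{a+b}$, $[x,y]=-\varepsilon(x,y)[y,x]$, and $\varepsilon(z,x)[x,[y,z]]+\varepsilon(y,z)[z,[x,y]]+\varepsilon(x,y)[y,[z,x]]=0$. An $F$-manifold color algebra is $(A,\cdot,[\,,\,],\varepsilon)$ with $(A,\cdot,\varepsilon)$ an $\varepsilon$-commutative associative algebra and $(A,[\,,\,],\varepsilon)$ a Lie color algebra such that $P_{x\cdot y}(z,w)=x\cdot P_y(z,w)+\varepsilon(x,y)y\cdot P_x(z,w)$ for homogeneous $x,y,z,w$, where $P_x(y,z)=[x,y\cdot z]-[x,y]\cdot z-\varepsilon(x,y)y\cdot[x,z]$. Representations: $\mu:A\to\mathfrak{gl}(V)$ with $\mu(x)V_a\subseteq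 V_{a+b}$ for $x\in A_b$ and $\mu(x\cdot y)=\mu(x)\mu(y)$ (for the associative algebra); $\rho:A\to\mathfrak{gl}(V)$ with the same degree condition and $\rho([x,y])=\rho(x)\rho(y)-\varepsilon(x,y)\rho(y)\rho(x)$ (for the Lie color algebra). A representation of the $F$-manifold color algebra $A$ is a triple $(W,\rho',\mu')$ with $\rho'$ a Lie color representation and $\mu'$ an associative representation on the graded space $W$ such that for homogeneous $x_1,x_2,x_3$: $R_{\rho',\mu'}(x_1\cdot x_2,x_3)=\mu'(x_1)R_{\rho',\mu'}(x_2,x_3)+\varepsilon(x_1,x_2)\mu'(x_2)R_{\rho',\mu'}(x_1,x_3)$ and $\mu'(P_{x_1}(x_2,x_3))=\varepsilon(x_1,x_2+x_3)S_{\rho',\mu'}(x_2,x_3)\mu'(x_1)-\mu'(x_1)S_{\rho',\mu'}(x_2,x_3)$, with $R_{\rho',\mu'}(x_1,x_2)=\rho'(x_1)\mu'(x_2)-\varepsilon(x_1,x_2)\mu'(x_2)\rho'(x_1)-\mu'([x_1,x_2])$ and $S_{\rho',\mu'}(x_1,x_2)=\mu'(x_1)\rho'(x_2)+\varepsilon(x_1,x_2)\mu'(x_2)\rho'(x_1)-\rho'(x_1\cdot x_2)$. The dual $V^*$ is $G$-graded by $V^*_a=\{\alpha\in V^*:\alpha(V_b)=0\text{ for all }b\neq -a\}$. For a linear map $\phi:A\to\mathfrak{gl}(V)$ (with $\phi(x)V_b\subseteq V_{a+b}$ for $x\in A_a$), $\phi^*:A\to\mathfrak{gl}(V^* )$ is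 defined by $\phi^*(x)\alpha\in V^*_{a+c}$ and $\langle\phi^*(x)\alpha,v\rangle=-\varepsilon(x,\alpha)\langle\alpha,\phi(x)v\rangle$ for $x\in A_a$, $v\in V_b$, $\alpha\in V^*_c$; this defines $\rho^*$ and $\mu^*$. *)

From HB Require Import structures.
From mathcomp Require Import all_boot all_order all_algebra.
Set Implicit Arguments. Unset Strict Implicit. Unset Printing Implicit Defensive.
Import GRing.Theory.
Local Open Scope ring_scope.

Section Defs.
Variables (K : fieldType) (G : zmodType) (eps : G -> G -> K).

Definition skew_bichar : Prop :=
  [/\ forall a b, eps a b != 0,
      forall a b, eps a b * eps b a = 1,
      forall a b c, eps a (b + c) = eps a b * eps a c &
      forall a b c, eps (a + b) c = eps a c * eps b c].

(* A finite-dimensional G-graded space: V = (+)_{a in G} V_a (direct sum,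
   finitely many nonzero pieces, since V is finite-dimensional). *)
Definition graded_space (V : vectType K) (Vg : G -> {vspace V}) : Prop :=
  exists s : seq G,
  [/\ uniq s,
      forall a, a \notin s -> Vg a = 0%VS,
      (\sum_(a <- s) Vg a)%VS = fullv &
      forall w : G -> V, (forall a, w a \in Vg a) ->
        \sum_(a <- s) w a = 0 -> forall a, a \in s -> w a = 0].

Variables (A : vectType K) (Ag : G -> {vspace A}).

Definition bilinear_op (op : A -> A -> A) : Prop :=
  (forall k x y z, op (k *: x + y) z = k *: op x z + op y z) /\
  (forall k x y z, op x (k *: y + z) = k *: op x y + op x z).

Definition eps_comm_assoc (mul : A -> A -> A) : Prop :=
  [/\ bilinear_op mul,
      forall x y z, mul (mul x y) z = mul x (mul y z),
      forall a b x y, x \in Ag a -> y \in Ag b -> mul x y \in Ag (a + b) &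
      forall a b x y, x \in Ag a -> y \in Ag b -> mul x y = eps a b *: mul y x].

Definition lie_color (br : A -> A -> A) : Prop :=
  [/\ bilinear_op br,
      forall a b x y, x \in Ag a -> y \in Ag b -> br x y \in Ag (a + b),
      forall a b x y, x \in Ag a -> y \in Ag b -> br x y = - (eps a b *: br y x) &
      forall a b c x y z, x \in Ag a -> y \in Ag b -> z \in Ag c ->
        eps c a *: br x (br y z) + eps b c *: br z (br x y)
        + eps a b *: br y (br z x) = 0].

Variables (mul br : A -> A -> A).

(* P_x(y,z) for x in A_a, y in A_b *)
Definition Pop (a b : G) (x y z : A) : A :=
  br x (mul y z) - mul (br x y) z - eps a b *: mul y (br x z).

Definition F_manifold_color : Prop :=
  [/\ eps_comm_assoc mul, lie_color br &
      forall a b c d x y z w, x \in Ag a -> y \in Ag b -> z \in Ag c -> w \in Ag d ->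
        Pop (a + b) c (mul x y) z w =
        mul x (Pop b c y z w) + eps a b *: mul y (Pop a c x z w)].

Variables (W : vectType K) (Wg : G -> W -> Prop).

Definition lin_map (phi : A -> 'End(W)) : Prop :=
  forall k x y, phi (k *: x + y) = k *: phi x + phi y.

Definition deg_map (phi : A -> 'End(W)) : Prop :=
  forall a b x w, x \in Ag b -> Wg a w -> Wg (a + b) (phi x w).

Definition assoc_rep (mu : A -> 'End(W)) : Prop :=
  [/\ lin_map mu, deg_map mu &
      forall x y w, mu (mul x y) w = mu x (mu y w)].

Definition lie_rep (rho : A -> 'End(W)) : Prop :=
  [/\ lin_map rho, deg_map rho &
      forall a b x y w, x \in Ag a -> y \in Ag b ->
        rho (br x y) w = rho x (rho y w) - eps a b *: rho y (rho x w)].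

(* R_{rho,mu}(x1,x2), x1 in A_a1, x2 in A_a2, applied to w *)
Definition Rop (rho mu : A -> 'End(W)) (a1 a2 : G) (x1 x2 : A) (w : W) : W :=
  rho x1 (mu x2 w) - eps a1 a2 *: mu x2 (rho x1 w) - mu (br x1 x2) w.

Definition Sop (rho mu : A -> 'End(W)) (a1 a2 : G) (x1 x2 : A) (w : W) : W :=
  mu x1 (rho x2 w) + eps a1 a2 *: mu x2 (rho x1 w) - rho (mul x1 x2) w.

Definition Top (rho mu : A -> 'End(W)) (a1 a2 : G) (x1 x2 : A) (w : W) : W :=
  - (eps a1 a2 *: rho x2 (mu x1 w)) - rho x1 (mu x2 w) + rho (mul x1 x2) w.

Definition F_manifold_rep (rho mu : A -> 'End(W)) : Prop :=
  [/\ lie_rep rho, assoc_rep mu,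
      forall a1 a2 a3 x1 x2 x3 w, x1 \in Ag a1 -> x2 \in Ag a2 -> x3 \in Ag a3 ->
        Rop rho mu (a1 + a2) a3 (mul x1 x2) x3 w =
        mu x1 (Rop rho mu a2 a3 x2 x3 w) + eps a1 a2 *: mu x2 (Rop rho mu a1 a3 x1 x3 w) &
      forall a1 a2 a3 x1 x2 x3 w, x1 \in Ag a1 -> x2 \in Ag a2 -> x3 \in Ag a3 ->
        mu (Pop a1 a2 x1 x2 x3) w =
        eps a1 (a2 + a3) *: Sop rho mu a2 a3 x2 x3 (mu x1 w)
        - mu x1 (Sop rho mu a2 a3 x2 x3 w)].

End Defs.

Definition dualsp (K : fieldType) (V : vectType K) := 'Hom(V, K^o).

Definition dual_hom (K : fieldType) (G : zmodType) (V : vectType K)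
    (Vg : G -> {vspace V}) (a : G) (alpha : dualsp V) : Prop :=
  forall b v, b != - a -> v \in Vg b -> alpha v = 0.

Definition is_dual_map (K : fieldType) (G : zmodType) (eps : G -> G -> K)
    (A : vectType K) (Ag : G -> {vspace A}) (V : vectType K) (Vg : G -> {vspace V})
    (phi : A -> 'End(V)) (phi' : A -> 'End(dualsp V)) : Prop :=
  lin_map phi' /\
  forall a c x alpha, x \in Ag a -> dual_hom Vg c alpha ->
    dual_hom Vg (a + c) (phi' x alpha) /\
    forall b v, v \in Vg b ->
      (phi' x alpha) v = - (eps a c * (alpha (phi x v) : K)).

From HB Require Import structures.
From mathcomp Require Import all_boot all_order all_algebra.
From mathcomp Require Import ring.
Import GRing.Theory.
Set Implicit Arguments. Unset Strict Implicit. Unset Printing Implicit Defensive.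
Local Open Scope ring_scope.

(** Since V and its dual are spanned by homogeneous elements, every identity
   between operators on the dual can be tested on a homogeneous functional alpha
   evaluated at a homogeneous vector v.  There the defining property of the dual
   maps rho', mu' turns R_{rho',-mu'}(x,y) alpha into eps(x+y,alpha) times
   alpha o R_{rho,mu}(x,y), and S_{rho',-mu'}(x,y) alpha into eps(x+y,alpha)
   times alpha o T_{rho,mu}(x,y).  The two compatibility conditions for
   (rho', -mu') thus become the hypotheses on (rho, mu) composed with alpha, up
   to eps-factors that cancel by the bicharacter identities. *)

Section GradedSpace.
Variables (K : fieldType) (G : zmodType) (V : vectType K) (Vg : G -> {vspace V}).
Hypothesis HV : graded_space Vg.

Lemma graded_projections : exists (s : seq G) (pi : G -> 'End(V)),
  [/\ forall a v, pi a v \in Vg a,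
      forall a b v, v \in Vg b -> pi a v = (if a == b then v else 0) &
      forall v, \sum_(a <- s) pi a v = v].
Proof.
have [s [s_uniq Vg_out Vg_sum Vg_free]] := HV.
pose pi := sumv_pi_for (esym Vg_sum); exists s, pi.
have pi_mem a v : pi a v \in Vg a by exact: memv_sum_pi.
have sum_pi v : \sum_(a <- s) pi a v = v.
  by apply: sumv_pi_uniq_sum; [exact: filter_uniq | exact: memvf].
split=> // a b v vb.
have [bs|bNs] := boolP (b \in s); last first.
  have -> : v = 0 by apply/eqP; rewrite -memv0 -(Vg_out b).
  by rewrite linear0; case: eqP.
have [as_|aNs] := boolP (a \in s); last first.
  have /eqP -> : pi a v == 0 by rewrite -memv0 -(Vg_out a).
  by case: eqP => // eq_ab; rewrite eq_ab bs in aNs.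
pose w c := pi c v - (if c == b then v else 0).
have w_mem c : w c \in Vg c.
  by apply: memvB => //; case: eqP => [->|_]; rewrite ?mem0v.
have w_sum : \sum_(c <- s) w c = 0.
  rewrite sumrB sum_pi (big_rem b) //= eqxx big_seq big1 ?addr0 ?subrr // => c.
  by rewrite mem_rem_uniq // inE => /andP[/negbTE ->].
by apply/subr0_eq; apply: (Vg_free w w_mem w_sum a as_).
Qed.

Lemma graded_ind (P : V -> Prop) :
  (forall k u v, P u -> P v -> P (k *: u + v)) ->
  (forall a v, v \in Vg a -> P v) -> forall v, P v.
Proof.
move=> Plin Phom v; have [s [pi [pi_mem _ sum_pi]]] := graded_projections.
rewrite -(sum_pi v); elim: s {sum_pi} => [|a s IHs].
  by rewrite big_nil; apply: (Phom 0); rewrite mem0v.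
by rewrite big_cons -[pi a v]scale1r; apply: Plin => //; apply: Phom (pi_mem a v).
Qed.

Lemma graded_lfunP (U : vectType K) (f g : 'Hom(V, U)) :
  (forall a v, v \in Vg a -> f v = g v) -> f = g.
Proof. by move=> fg; apply/lfunP; apply: graded_ind => // k u v fu fv; rewrite !linearP /= fu fv. Qed.

Lemma dual_homD c (f g : dualsp V) :
  dual_hom Vg c f -> dual_hom Vg c g -> dual_hom Vg c (f + g).
Proof. by move=> Hf Hg b v nb vb; rewrite add_lfunE (Hf b v) ?(Hg b v) ?addr0. Qed.

Lemma dual_homN c (f : dualsp V) : dual_hom Vg c f -> dual_hom Vg c (- f).
Proof. by move=> Hf b v nb vb; rewrite opp_lfunE (Hf b v) ?oppr0. Qed.

Lemma dual_homZ c k (f : dualsp V) : dual_hom Vg c f -> dual_hom Vg c (k *: f).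
Proof. by move=> Hf b v nb vb; rewrite scale_lfunE (Hf b v) ?scaler0. Qed.

Lemma dual_homB c (f g : dualsp V) :
  dual_hom Vg c f -> dual_hom Vg c g -> dual_hom Vg c (f - g).
Proof. by move=> Hf Hg; apply/dual_homD/dual_homN. Qed.

(* A functional is the sum of its restrictions to the V_a, and the restriction
   to V_a lies in V^*_(-a). *)
Lemma dual_endP (f g : 'End(dualsp V)) :
  (forall c alpha b v, dual_hom Vg c alpha -> v \in Vg b -> f alpha v = g alpha v) ->
  f = g.
Proof.
move=> fg; have [s [pi [_ pi_id sum_pi]]] := graded_projections.
apply/lfunP => alpha.
have -> : alpha = \sum_(a <- s) (alpha \o pi a)%VF.
  apply/lfunP => v; rewrite sum_lfunE -{1}(sum_pi v) linear_sum.
  by apply: eq_bigr => a _; rewrite comp_lfunE.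
rewrite !linear_sum; apply: eq_bigr => a _.
have alpha_pi_hom : dual_hom Vg (- a) (alpha \o pi a)%VF.
  move=> b v; rewrite opprK => nba vb.
  by rewrite comp_lfunE (pi_id a b v vb) eq_sym (negbTE nba) linear0.
by apply: graded_lfunP => b v vb; apply: fg alpha_pi_hom vb.
Qed.

Lemma dual_graded_eqfun (f g : dualsp V -> dualsp V) (F F' : 'End(dualsp V)) :
  f =1 F -> g =1 F' ->
  (forall c alpha b v, dual_hom Vg c alpha -> v \in Vg b -> f alpha v = g alpha v) ->
  f =1 g.
Proof.
move=> fF gF' fg; suff FF' : F = F' by move=> alpha; rewrite fF gF' FF'.
by apply: dual_endP => c alpha b v Halpha vb; rewrite -fF -gF'; apply: fg Halpha vb.
Qed.

End GradedSpace.

Section DualMap.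
Variables (K : fieldType) (G : zmodType) (eps : G -> G -> K).
Variables (A : vectType K) (Ag : G -> {vspace A}) (V : vectType K) (Vg : G -> {vspace V}).
Variables (phi : A -> 'End(V)) (phi' : A -> 'End(dualsp V)).
Hypothesis Hphi' : is_dual_map eps Ag Vg phi phi'.

Lemma dual_mapE a c b x alpha v :
  x \in Ag a -> dual_hom Vg c alpha -> v \in Vg b ->
  phi' x alpha v = - (eps a c * alpha (phi x v)).
Proof. by move=> xa Halpha vb; have [_ /(_ b v vb)] := Hphi'.2 a c x alpha xa Halpha. Qed.

Lemma dual_map_hom a c e x alpha :
  x \in Ag a -> dual_hom Vg c alpha -> a + c = e -> dual_hom Vg e (phi' x alpha).
Proof. by move=> xa Halpha <-; have [] := Hphi'.2 a c x alpha xa Halpha. Qed.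

End DualMap.

Definition lfun_evalE := (@add_lfunE, @opp_lfunE, @scale_lfunE, @comp_lfunE).

Lemma lin_mapZ (K : fieldType) (A W : vectType K) (phi : A -> 'End(W)) k x :
  lin_map phi -> phi (k *: x) = k *: phi x.
Proof.
move=> phi_lin; have phi0 : phi 0 = 0.
  have E := phi_lin 1 0 0; rewrite !scale1r addr0 in E.
  by apply: (addrI (phi 0)); rewrite addr0 -E.
by rewrite -[k *: x]addr0 phi_lin phi0 addr0.
Qed.

Lemma scale_regE (K : fieldType) (k : K) (t : K^o) : k *: t = k * t.
Proof. by []. Qed.

Section OperatorForms.
Variables (K : fieldType) (G : zmodType) (eps : G -> G -> K).
Variables (A W : vectType K) (mul br : A -> A -> A) (phi psi : A -> 'End(W)).

Lemma Rop_is_lfun a1 a2 x1 x2 :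
  exists F : 'End(W), Rop eps br phi psi a1 a2 x1 x2 =1 F.
Proof.
exists (phi x1 \o psi x2 - eps a1 a2 *: (psi x2 \o phi x1) - psi (br x1 x2))%VF.
by move=> w; rewrite /Rop !lfun_evalE.
Qed.

Lemma Sop_is_lfun a1 a2 x1 x2 :
  exists F : 'End(W), Sop eps mul phi psi a1 a2 x1 x2 =1 F.
Proof.
exists (psi x1 \o phi x2 + eps a1 a2 *: (psi x2 \o phi x1) - phi (mul x1 x2))%VF.
by move=> w; rewrite /Sop !lfun_evalE.
Qed.

End OperatorForms.

Section DualRepresentation.
Variables (K : fieldType) (G : zmodType) (eps : G -> G -> K).
Hypothesis Heps : skew_bichar eps.
Variables (A : vectType K) (Ag : G -> {vspace A}) (mul br : A -> A -> A).
Hypothesis HF : F_manifold_color eps Ag mul br.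
Variables (V : vectType K) (Vg : G -> {vspace V}).
Hypothesis HV : graded_space Vg.
Variables (rho mu : A -> 'End(V)) (rho' mu' : A -> 'End(dualsp V)).
Hypothesis Hrho : lie_rep eps Ag br (fun a (v : V) => v \in Vg a) rho.
Hypothesis Hmu : assoc_rep Ag mul (fun a (v : V) => v \in Vg a) mu.
Hypothesis Hrho' : is_dual_map eps Ag Vg rho rho'.
Hypothesis Hmu' : is_dual_map eps Ag Vg mu mu'.

Local Notation nmu' := (fun x => - mu' x).

Lemma epsDl a b c : eps (a + b) c = eps a c * eps b c. Proof. by case: Heps. Qed.
Lemma epsDr a b c : eps a (b + c) = eps a b * eps a c. Proof. by case: Heps. Qed.
Lemma eps_neq0 a b : eps a b != 0. Proof. by case: Heps. Qed.
Lemma epsC a b : eps b a = (eps a b)^-1.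
Proof. by case: Heps => eps_nz epsK _ _; apply: (mulfI (eps_nz a b)); rewrite epsK divff. Qed.

Lemma mul_graded a b x y : x \in Ag a -> y \in Ag b -> mul x y \in Ag (a + b).
Proof. by case: HF => [[_ _ H _] _ _]; apply: H. Qed.
Lemma br_graded a b x y : x \in Ag a -> y \in Ag b -> br x y \in Ag (a + b).
Proof. by case: HF => _ [_ H _ _] _; apply: H. Qed.
Lemma rho_graded a d x v : x \in Ag a -> v \in Vg d -> rho x v \in Vg (d + a).
Proof. by case: Hrho => _ H _; apply: H. Qed.
Lemma mu_graded a d x v : x \in Ag a -> v \in Vg d -> mu x v \in Vg (d + a).
Proof. by case: Hmu => _ H _; apply: H. Qed.

Lemma Top_graded a b d x y v :
  x \in Ag a -> y \in Ag b -> v \in Vg d -> Top eps mul rho mu a b x y v \in Vg (d + a + b).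
Proof.
move=> xa yb vd; rewrite /Top; apply: memvD; first apply: memvB.
- by rewrite memvN; apply/memvZ/(rho_graded yb (mu_graded xa vd)).
- by rewrite addrAC; apply: rho_graded xa (mu_graded yb vd).
- by rewrite -addrA; apply: rho_graded (mul_graded xa yb) vd.
Qed.

Lemma Pop_graded a b c x y z :
  x \in Ag a -> y \in Ag b -> z \in Ag c -> Pop eps mul br a b x y z \in Ag (a + b + c).
Proof.
move=> xa yb zc; rewrite /Pop; apply: memvB; first apply: memvB.
- by rewrite -addrA; apply: br_graded xa (mul_graded yb zc).
- exact: mul_graded (br_graded xa yb) zc.
- by apply: memvZ; rewrite addrAC addrC; apply: mul_graded yb (br_graded xa zc).
Qed.

Lemma dual_Rop a b c d x y alpha v :
  x \in Ag a -> y \in Ag b -> dual_hom Vg c alpha -> v \in Vg d ->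
  Rop eps br rho' nmu' a b x y alpha v = eps (a + b) c * alpha (Rop eps br rho mu a b x y v).
Proof.
move=> xa yb Halpha vd; rewrite /Rop !lfun_evalE !linearN /= !lfun_evalE.
have mu'yalpha := dual_map_hom Hmu' yb Halpha (erefl _).
have rho'xalpha := dual_map_hom Hrho' xa Halpha (erefl _).
rewrite (dual_mapE Hrho' xa mu'yalpha vd) (dual_mapE Hmu' yb rho'xalpha vd).
rewrite (dual_mapE Hmu' (br_graded xa yb) Halpha vd).
rewrite (dual_mapE Hmu' yb Halpha (rho_graded xa vd)).
rewrite (dual_mapE Hrho' xa Halpha (mu_graded yb vd)).
rewrite !linearB !linearZ /= !scale_regE !epsDl !epsDr (epsC a b).
by field; rewrite eps_neq0.
Qed.

Lemma dual_Rop_graded a b c x y alpha :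
  x \in Ag a -> y \in Ag b -> dual_hom Vg c alpha ->
  dual_hom Vg (a + b + c) (Rop eps br rho' nmu' a b x y alpha).
Proof.
move=> xa yb Halpha; rewrite /Rop !opp_lfunE linearN.
have mu'yalpha := dual_map_hom Hmu' yb Halpha (erefl _).
have rho'xalpha := dual_map_hom Hrho' xa Halpha (erefl _).
apply: dual_homB; first apply: dual_homB.
- by apply/dual_homN/(dual_map_hom Hrho' xa mu'yalpha); rewrite addrA.
- by apply/dual_homZ/dual_homN/(dual_map_hom Hmu' yb rho'xalpha); rewrite addrCA addrA.
- exact/dual_homN/(dual_map_hom Hmu' (br_graded xa yb) Halpha).
Qed.

Lemma dual_Sop a b c d x y alpha v :
  x \in Ag a -> y \in Ag b -> dual_hom Vg c alpha -> v \in Vg d ->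
  Sop eps mul rho' nmu' a b x y alpha v =
  eps (a + b) c * alpha (Top eps mul rho mu a b x y v).
Proof.
move=> xa yb Halpha vd; rewrite /Sop /Top !lfun_evalE.
have rho'yalpha := dual_map_hom Hrho' yb Halpha (erefl _).
have rho'xalpha := dual_map_hom Hrho' xa Halpha (erefl _).
rewrite (dual_mapE Hmu' xa rho'yalpha vd) (dual_mapE Hmu' yb rho'xalpha vd).
rewrite (dual_mapE Hrho' (mul_graded xa yb) Halpha vd).
rewrite (dual_mapE Hrho' yb Halpha (mu_graded xa vd)).
rewrite (dual_mapE Hrho' xa Halpha (mu_graded yb vd)).
rewrite !linearD !linearN !linearZ /= !scale_regE !epsDl !epsDr (epsC a b).
by field; rewrite eps_neq0.
Qed.

Lemma dual_Sop_graded a b c x y alpha :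
  x \in Ag a -> y \in Ag b -> dual_hom Vg c alpha ->
  dual_hom Vg (a + b + c) (Sop eps mul rho' nmu' a b x y alpha).
Proof.
move=> xa yb Halpha; rewrite /Sop !opp_lfunE.
have rho'yalpha := dual_map_hom Hrho' yb Halpha (erefl _).
have rho'xalpha := dual_map_hom Hrho' xa Halpha (erefl _).
apply: dual_homB; first apply: dual_homD.
- by apply/dual_homN/(dual_map_hom Hmu' xa rho'yalpha); rewrite addrA.
- by apply/dual_homZ/dual_homN/(dual_map_hom Hmu' yb rho'xalpha); rewrite addrCA addrA.
- exact: (dual_map_hom Hrho' (mul_graded xa yb) Halpha).
Qed.

Lemma dual_lie_rep : lie_rep eps Ag br (dual_hom Vg) rho'.
Proof.
split.
- exact: Hrho'.1.
- by move=> c a x alpha xa Halpha; apply: (dual_map_hom Hrho' xa Halpha); rewrite addrC.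
move=> a b x y w xa yb.
suff -> : rho' (br x y) = (rho' x \o rho' y - eps a b *: (rho' y \o rho' x))%VF.
  by rewrite !lfun_evalE.
apply: (dual_endP HV) => c alpha d v Halpha vd; rewrite !lfun_evalE.
rewrite (dual_mapE Hrho' (br_graded xa yb) Halpha vd).
rewrite (dual_mapE Hrho' xa (dual_map_hom Hrho' yb Halpha (erefl _)) vd).
rewrite (dual_mapE Hrho' yb (dual_map_hom Hrho' xa Halpha (erefl _)) vd).
rewrite (dual_mapE Hrho' yb Halpha (rho_graded xa vd)).
rewrite (dual_mapE Hrho' xa Halpha (rho_graded yb vd)).
have [_ _ rho_br] := Hrho; rewrite (rho_br a b x y v xa yb).
rewrite !linearB !linearZ /= !scale_regE !epsDl !epsDr (epsC a b).
by field; rewrite eps_neq0.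
Qed.

Lemma dual_mu_mul a b x y :
  x \in Ag a -> y \in Ag b -> mu' (mul x y) = - (mu' x \o mu' y)%VF.
Proof.
move=> xa yb; apply: (dual_endP HV) => c alpha d v Halpha vd; rewrite !lfun_evalE.
rewrite (dual_mapE Hmu' (mul_graded xa yb) Halpha vd).
rewrite (dual_mapE Hmu' xa (dual_map_hom Hmu' yb Halpha (erefl _)) vd).
rewrite (dual_mapE Hmu' yb Halpha (mu_graded xa vd)).
(* Transposition reverses products; eps-commutativity of A restores the order. *)
have [[_ _ _ mulC] _ _] := HF; have [mu_lin _ mu_mul] := Hmu.
rewrite (mulC a b x y xa yb) (lin_mapZ _ _ mu_lin) !lfun_evalE mu_mul linearZ /= scale_regE.
by rewrite !epsDl !epsDr; ring.
Qed.

Lemma dual_assoc_rep (HA : graded_space Ag) :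
  assoc_rep Ag mul (dual_hom Vg) nmu'.
Proof.
have [[[mul_linl mul_linr] _ _ _] _ _] := HF; have mu'_lin := Hmu'.1.
split.
- by move=> k x y; rewrite mu'_lin opprD scalerN.
- move=> c a x alpha xa Halpha; rewrite opp_lfunE.
  by apply/dual_homN/(dual_map_hom Hmu' xa Halpha); rewrite addrC.
suff mu'_mul y x w : mu' (mul x y) w = - mu' x (mu' y w).
  by move=> x y w; rewrite !opp_lfunE linearN mu'_mul opprK.
elim/(graded_ind HA): y x w => [k y1 y2 IHy1 IHy2 | b y yb] x w.
  by rewrite mul_linr !mu'_lin !lfun_evalE IHy1 IHy2 linearP opprD scalerN.
elim/(graded_ind HA): x w => [k x1 x2 IHx1 IHx2 | a x xa] w.
  by rewrite mul_linl !mu'_lin !lfun_evalE IHx1 IHx2 opprD scalerN.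
by rewrite (dual_mu_mul xa yb) !lfun_evalE.
Qed.

Lemma dual_Rop_mul
    (HR : forall a b c x y z w, x \in Ag a -> y \in Ag b -> z \in Ag c ->
       Rop eps br rho mu (a + b) c (mul x y) z w =
       eps a (b + c) *: Rop eps br rho mu b c y z (mu x w)
       + eps b c *: Rop eps br rho mu a c x z (mu y w))
    a1 a2 a3 x1 x2 x3 w : x1 \in Ag a1 -> x2 \in Ag a2 -> x3 \in Ag a3 ->
  Rop eps br rho' nmu' (a1 + a2) a3 (mul x1 x2) x3 w =
  nmu' x1 (Rop eps br rho' nmu' a2 a3 x2 x3 w)
  + eps a1 a2 *: nmu' x2 (Rop eps br rho' nmu' a1 a3 x1 x3 w).
Proof.
move=> x1a x2a x3a; move: w.
have [R12 R12E] := Rop_is_lfun eps br rho' nmu' (a1 + a2) a3 (mul x1 x2) x3.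
have [R2 R2E] := Rop_is_lfun eps br rho' nmu' a2 a3 x2 x3.
have [R1 R1E] := Rop_is_lfun eps br rho' nmu' a1 a3 x1 x3.
apply: (dual_graded_eqfun HV R12E
  (F' := (- mu' x1 \o R2 + eps a1 a2 *: (- mu' x2 \o R1))%VF)).
  by move=> w; rewrite /= R2E R1E !lfun_evalE.
move=> c alpha d v Halpha vd /=.
rewrite (dual_Rop (mul_graded x1a x2a) x3a Halpha vd) HR //.
rewrite add_lfunE scale_lfunE !opp_lfunE.
rewrite (dual_mapE Hmu' x1a (dual_Rop_graded x2a x3a Halpha) vd).
rewrite (dual_mapE Hmu' x2a (dual_Rop_graded x1a x3a Halpha) vd).
rewrite (dual_Rop x2a x3a Halpha (mu_graded x1a vd)).
rewrite (dual_Rop x1a x3a Halpha (mu_graded x2a vd)).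
rewrite linearD !linearZ /= !scale_regE !epsDl !epsDr (epsC a1 a2).
by field; rewrite eps_neq0.
Qed.

Lemma dual_Pop_mu
    (HP : forall a b c x y z w, x \in Ag a -> y \in Ag b -> z \in Ag c ->
       mu (Pop eps mul br a b x y z) w =
       - (eps a (b + c) *: Top eps mul rho mu b c y z (mu x w))
       + mu x (Top eps mul rho mu b c y z w))
    a1 a2 a3 x1 x2 x3 w : x1 \in Ag a1 -> x2 \in Ag a2 -> x3 \in Ag a3 ->
  nmu' (Pop eps mul br a1 a2 x1 x2 x3) w =
  eps a1 (a2 + a3) *: Sop eps mul rho' nmu' a2 a3 x2 x3 (nmu' x1 w)
  - nmu' x1 (Sop eps mul rho' nmu' a2 a3 x2 x3 w).
Proof.
move=> x1a x2a x3a; move: w.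
have [S SE] := Sop_is_lfun eps mul rho' nmu' a2 a3 x2 x3.
apply: (dual_graded_eqfun HV (F := - mu' (Pop eps mul br a1 a2 x1 x2 x3))
  (F' := (eps a1 (a2 + a3) *: (S \o - mu' x1) - (- mu' x1 \o S))%VF)) => //.
  by move=> w; rewrite /= !SE !lfun_evalE.
move=> c alpha d v Halpha vd /=.
have mu'x1alpha := dual_map_hom Hmu' x1a Halpha (erefl _).
rewrite add_lfunE scale_lfunE !opp_lfunE.
rewrite (dual_mapE Hmu' (Pop_graded x1a x2a x3a) Halpha vd) (HP _ _ a3) //.
rewrite (dual_Sop x2a x3a (dual_homN mu'x1alpha) vd).
rewrite (dual_mapE Hmu' x1a (dual_Sop_graded x2a x3a Halpha) vd).
rewrite (dual_Sop x2a x3a Halpha (mu_graded x1a vd)).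
rewrite opp_lfunE (dual_mapE Hmu' x1a Halpha (Top_graded x2a x3a vd)).
rewrite linearD (linearN alpha) linearZ /= !scale_regE !epsDl !epsDr (epsC a1 a2) (epsC a1 a3).
by field; rewrite !eps_neq0.
Qed.

End DualRepresentation.

Theorem proposition3p6
  (K : closedFieldType) (G : zmodType) (eps : G -> G -> K)
  (charK : [pchar K] =i pred0) (Heps : skew_bichar eps)
  (A : vectType K) (Ag : G -> {vspace A}) (HA : graded_space Ag)
  (mul br : A -> A -> A) (HF : F_manifold_color eps Ag mul br)
  (V : vectType K) (Vg : G -> {vspace V}) (HV : graded_space Vg)
  (rho mu : A -> 'End(V))
  (Hrho : lie_rep eps Ag br (fun a (v : V) => v \in Vg a) rho)
  (Hmu : assoc_rep Ag mul (fun a (v : V) => v \in Vg a) mu)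
  (HR : forall a b c x y z w, x \in Ag a -> y \in Ag b -> z \in Ag c ->
     Rop eps br rho mu (a + b) c (mul x y) z w =
     eps a (b + c) *: Rop eps br rho mu b c y z (mu x w)
     + eps b c *: Rop eps br rho mu a c x z (mu y w))
  (HP : forall a b c x y z w, x \in Ag a -> y \in Ag b -> z \in Ag c ->
     mu (Pop eps mul br a b x y z) w =
     - (eps a (b + c) *: Top eps mul rho mu b c y z (mu x w))
     + mu x (Top eps mul rho mu b c y z w))
  (rho' mu' : A -> 'End(dualsp V))
  (Hrho' : is_dual_map eps Ag Vg rho rho')
  (Hmu' : is_dual_map eps Ag Vg mu mu') :
  F_manifold_rep eps Ag mul br (dual_hom Vg) rho' (fun x => - mu' x).
Proof.
split.
- exact (dual_lie_rep Heps HF HV Hrho Hrho').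
- exact (dual_assoc_rep Heps HF HV Hmu Hmu' HA).
- exact (dual_Rop_mul Heps HF HV Hrho Hmu Hrho' Hmu' HR).
- exact (dual_Pop_mu Heps HF HV Hrho Hmu Hrho' Hmu' HP).
Qed.
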